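(* Every pre-Hilbert $*$-category is additive, i.e. it has finite biproducts and its unique enrichment in commutative monoids (coming from the biproducts) is an enrichment in abelian groups.
   Context: A $*$-category is a category equipped with a choice of morphism $f^*\colon Y\to X$ for each morphism $f\colon X\to Y$ such that $1^*=1$, $(gf)^*=f^*g^*$ and $(f^* )^*=f$. A morphism $f$ is an isometry (isometric) if $f^*f=1$. A kernel of $f\colon X\to Y$ is an equaliser of $f$ and the zero morphism; an isometric kernel is a kernel that is an isometry. An orthonormal biproduct of $X_1,X_2$ is a biproduct $(X,s_1,r_1,s_2,r_2)$ (so $(X,s_1,s_2)$ a coproduct, $(X,r_1,r_2)$ a product, $r_ks_k=1$, $r_ks_j=0$ for $j\neq k$) with $r_k=s_k^*$ for each $k$. A pre-Hilbert $*$-category is a $*$-category in which (R1) there is a zero object, (R2) every pair of objects has an orthonormal biproduct, (R3) every morphism has an isometric kernel, and (R4) for every object $X$ the diagonal $\Delta=\begin{bmatrix}1\\1\end{bmatrix}\colon X\to X\oplus X$ (into a chosen orthonormal biproduct) is a normal monomorphism, i.e. a kernel of some morphism. A category with finite biproducts has a unique enrichment in commutative monoids, with $f+g=\nabla(f\oplus g)\Delta$. *)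

Set Implicit Arguments.
Unset Strict Implicit.

Record Category := {
  Obj :> Type;
  Hom : Obj -> Obj -> Type;
  idm : forall X : Obj, Hom X X;
  comp : forall X Y Z : Obj, Hom Y Z -> Hom X Y -> Hom X Z;
  comp_idl : forall X Y (f : Hom X Y), comp (idm Y) f = f;
  comp_idr : forall X Y (f : Hom X Y), comp f (idm X) = f;
  comp_assoc : forall W X Y Z (h : Hom Y Z) (g : Hom X Y) (f : Hom W X),
      comp h (comp g f) = comp (comp h g) f
}.

Arguments idm {c} X.
Arguments Hom {c} _ _.
Arguments comp {c X Y Z} g f.

Section Notions.
Variable C : Category.

Definition is_zero_object (Z : C) : Prop :=
  (forall Y : C, exists! f : Hom (c:=C) Z Y, True) /\
  (forall X : C, exists! f : Hom (c:=C) X Z, True).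

Definition has_zero_object : Prop := exists Z : C, is_zero_object Z.

Definition is_zero_mor (X Y : C) (f : Hom (c:=C) X Y) : Prop :=
  exists (Z : C) (a : Hom (c:=C) X Z) (b : Hom (c:=C) Z Y),
    is_zero_object Z /\ f = comp b a.

Definition is_biproduct (X1 X2 B : C)
  (s1 : Hom (c:=C) X1 B) (r1 : Hom (c:=C) B X1) (s2 : Hom (c:=C) X2 B) (r2 : Hom (c:=C) B X2) : Prop :=
  (forall W (g1 : Hom (c:=C) X1 W) (g2 : Hom (c:=C) X2 W),
      exists! h : Hom (c:=C) B W, comp h s1 = g1 /\ comp h s2 = g2) /\
  (forall W (g1 : Hom (c:=C) W X1) (g2 : Hom (c:=C) W X2),
      exists! h : Hom (c:=C) W B, comp r1 h = g1 /\ comp r2 h = g2) /\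
  comp r1 s1 = idm X1 /\ comp r2 s2 = idm X2 /\
  is_zero_mor (comp r1 s2) /\ is_zero_mor (comp r2 s1).

Definition has_binary_biproducts : Prop :=
  forall X1 X2 : C, exists B s1 r1 s2 r2, @is_biproduct X1 X2 B s1 r1 s2 r2.

Definition is_kernel (X Y K : C) (f : Hom (c:=C) X Y) (k : Hom (c:=C) K X) : Prop :=
  is_zero_mor (comp f k) /\
  forall W (m : Hom (c:=C) W X), is_zero_mor (comp f m) ->
    exists! u : Hom (c:=C) W K, comp k u = m.

Definition is_normal_mono (K X : C) (k : Hom (c:=C) K X) : Prop :=
  exists (Y : C) (f : Hom (c:=C) X Y), is_kernel f k.

(* h = f + g, computed through a biproduct Y (+) Y as
   h = nabla o <f, g>, with <f,g> the product pairing and nabla the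
   codiagonal.  (This equals nabla o (f (+) g) o Delta.) *)
Definition is_sum_via (X Y : C) (f g h : Hom (c:=C) X Y) (B : C)
  (s1 : Hom (c:=C) Y B) (r1 : Hom (c:=C) B Y) (s2 : Hom (c:=C) Y B) (r2 : Hom (c:=C) B Y) : Prop :=
  forall (p : Hom (c:=C) X B) (n : Hom (c:=C) B Y),
    comp r1 p = f -> comp r2 p = g ->
    comp n s1 = idm Y -> comp n s2 = idm Y ->
    comp n p = h.

(* additive: finite biproducts, and every hom-monoid is a group, i.e. every
   morphism has an additive inverse for the biproduct-induced addition *)
Definition is_additive : Prop :=
  has_zero_object /\ has_binary_biproducts /\
  forall (X Y : C) (f : Hom (c:=C) X Y), exists g : Hom (c:=C) X Y,
    forall (z : Hom (c:=C) X Y), is_zero_mor z ->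
    forall B s1 r1 s2 r2, @is_biproduct Y Y B s1 r1 s2 r2 ->
      is_sum_via f g z s1 r1 s2 r2.

End Notions.

Record StarCategory := {
  scat :> Category;
  star : forall X Y : scat, Hom (c:=scat) X Y -> Hom (c:=scat) Y X;
  star_id : forall X : scat, star (idm X) = idm X;
  star_comp : forall X Y Z (f : Hom (c:=scat) X Y) (g : Hom (c:=scat) Y Z),
      star (comp g f) = comp (star f) (star g);
  star_invol : forall X Y (f : Hom (c:=scat) X Y), star (star f) = f
}.

Arguments star {s X Y} f.

Section PreHilbert.
Variable C : StarCategory.

Definition is_isometry (X Y : C) (f : Hom (c:=C) X Y) : Prop :=
  comp (star f) f = idm X.

Definition is_orthonormal_biproduct (X1 X2 B : C)
  (s1 : Hom (c:=C) X1 B) (r1 : Hom (c:=C) B X1) (s2 : Hom (c:=C) X2 B) (r2 : Hom (c:=C) B X2) : Prop :=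
  is_biproduct s1 r1 s2 r2 /\ r1 = star s1 /\ r2 = star s2.

Definition is_preHilbert : Prop :=
  has_zero_object C /\
  (forall X1 X2 : C, exists B s1 r1 s2 r2,
              @is_orthonormal_biproduct X1 X2 B s1 r1 s2 r2) /\
  (forall (X Y : C) (f : Hom (c:=C) X Y),
              exists (K : C) (k : Hom (c:=C) K X), is_kernel f k /\ is_isometry k) /\
  (forall X : C, exists B s1 r1 s2 r2,
              @is_orthonormal_biproduct X X B s1 r1 s2 r2 /\
              forall d : Hom (c:=C) X B, comp r1 d = idm X -> comp r2 d = idm X ->
                is_normal_mono d).

End PreHilbert.

From Stdlib Require Import IndefiniteDescription.

(* Zero object and binary biproducts make every hom-set a monoid under the biproduct sum
   (Eckmann-Hilton), with composition bilinear, so it suffices to give each identity a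
   negative. Take an orthonormal biproduct X (+) X whose diagonal D is a normal mono; its
   codiagonal is N = D^*. Let k : K -> X (+) X be an isometric kernel of N. Since N o swap = N,
   the swap restricts to some tau on K, and 1 + swap = D o N vanishes on k, so 1 + tau = 0.
   With e = tau k^* s1, the morphism m = s1 + k e satisfies k^* m = k^* s1 + tau k^* s1 = 0,
   hence factors through D; so r1 m = r2 m, i.e. 1 + r1 k e = r2 k e, and r2 k e has the
   negative r2 k tau e. *)

Section ZeroMorphisms.
Context {C : Category}.

Lemma zero_object_hom_to_unique {Z : C} :
  is_zero_object Z -> forall X (f g : Hom X Z), f = g.
Proof.
  intros HZ X f g. destruct (proj2 HZ X) as [h [_ Hh]].
  rewrite <- (Hh f I), (Hh g I). reflexivity.
Qed.

Lemma zero_object_hom_from_unique {Z : C} :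
  is_zero_object Z -> forall Y (f g : Hom Z Y), f = g.
Proof.
  intros HZ Y f g. destruct (proj1 HZ Y) as [h [_ Hh]].
  rewrite <- (Hh f I), (Hh g I). reflexivity.
Qed.

Lemma is_zero_mor_comp_r {X Y W : C} (f : Hom X Y) (m : Hom W X) :
  is_zero_mor f -> is_zero_mor (comp f m).
Proof.
  intros [Z [a [b [HZ ->]]]]. exists Z, (comp a m), b.
  split; [exact HZ | apply eq_sym, comp_assoc].
Qed.

Lemma is_zero_mor_comp_l {X Y W : C} (f : Hom X Y) (h : Hom Y W) :
  is_zero_mor f -> is_zero_mor (comp h f).
Proof.
  intros [Z [a [b [HZ ->]]]]. exists Z, a, (comp h b).
  split; [exact HZ | apply comp_assoc].
Qed.

Lemma kernel_mono {X Y K : C} {f : Hom X Y} {k : Hom K X} :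
  is_kernel f k -> forall W (u v : Hom W K), comp k u = comp k v -> u = v.
Proof.
  intros [Hfk Hk] W u v E.
  assert (Hfku : is_zero_mor (comp f (comp k u))).
  { rewrite comp_assoc. apply is_zero_mor_comp_r, Hfk. }
  destruct (Hk W _ Hfku) as [w [_ Hw]].
  rewrite <- (Hw u eq_refl), (Hw v (eq_sym E)). reflexivity.
Qed.

Context {Z0 : C} (HZ : is_zero_object Z0).

Definition to_zero (X : C) : Hom X Z0 :=
  proj1_sig (constructive_indefinite_description _ (proj2 HZ X)).
Definition from_zero (Y : C) : Hom Z0 Y :=
  proj1_sig (constructive_indefinite_description _ (proj1 HZ Y)).

Definition zero (X Y : C) : Hom X Y := comp (from_zero Y) (to_zero X).

Lemma is_zero_mor_iff {X Y : C} (f : Hom X Y) : is_zero_mor f <-> f = zero X Y.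
Proof.
  split.
  - intros [Z [a [b [HZ' ->]]]].
    destruct (proj2 HZ' Z0) as [j _].
    assert (Hid : comp j (to_zero Z) = idm Z)
      by apply (zero_object_hom_from_unique HZ').
    rewrite <- (comp_idr b), <- Hid, comp_assoc, <- comp_assoc.
    unfold zero. f_equal;
      [apply (zero_object_hom_from_unique HZ) | apply (zero_object_hom_to_unique HZ)].
  - intros ->. exists Z0, (to_zero X), (from_zero Y). split; [exact HZ | reflexivity].
Qed.

Lemma zero_is_zero_mor (X Y : C) : is_zero_mor (zero X Y).
Proof. apply is_zero_mor_iff. reflexivity. Qed.

Lemma comp_zero_l {X Y W : C} (f : Hom X Y) : comp (zero Y W) f = zero X W.
Proof. apply is_zero_mor_iff, is_zero_mor_comp_r, zero_is_zero_mor. Qed.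

Lemma comp_zero_r {X Y W : C} (h : Hom Y W) : comp h (zero X Y) = zero X W.
Proof. apply is_zero_mor_iff, is_zero_mor_comp_l, zero_is_zero_mor. Qed.

End ZeroMorphisms.

Record biproduct {C : Category} (X1 X2 : C) := Biproduct {
  bp_obj : C;
  bp_s1 : Hom X1 bp_obj;
  bp_r1 : Hom bp_obj X1;
  bp_s2 : Hom X2 bp_obj;
  bp_r2 : Hom bp_obj X2;
  bp_spec : is_biproduct bp_s1 bp_r1 bp_s2 bp_r2
}.

Arguments Biproduct {C X1 X2 bp_obj bp_s1 bp_r1 bp_s2 bp_r2} bp_spec.
Arguments bp_obj {C X1 X2} b.
Arguments bp_s1 {C X1 X2} b.
Arguments bp_r1 {C X1 X2} b.
Arguments bp_s2 {C X1 X2} b.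
Arguments bp_r2 {C X1 X2} b.
Arguments bp_spec {C X1 X2} b.

Section Biproduct.
Context {C : Category} {Z0 : C} (HZ : is_zero_object Z0).
Context {X1 X2 : C} (b : biproduct X1 X2).

Lemma bp_hom_from_ext W (h h' : Hom (bp_obj b) W) :
  comp h (bp_s1 b) = comp h' (bp_s1 b) -> comp h (bp_s2 b) = comp h' (bp_s2 b) -> h = h'.
Proof.
  intros E1 E2.
  destruct (proj1 (bp_spec b) W (comp h (bp_s1 b)) (comp h (bp_s2 b))) as [u [_ Hu]].
  rewrite <- (Hu h (conj eq_refl eq_refl)). apply Hu. split; auto.
Qed.

Lemma bp_hom_to_ext W (h h' : Hom W (bp_obj b)) :
  comp (bp_r1 b) h = comp (bp_r1 b) h' -> comp (bp_r2 b) h = comp (bp_r2 b) h' -> h = h'.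
Proof.
  intros E1 E2.
  destruct (proj1 (proj2 (bp_spec b)) W (comp (bp_r1 b) h) (comp (bp_r2 b) h)) as [u [_ Hu]].
  rewrite <- (Hu h (conj eq_refl eq_refl)). apply Hu. split; auto.
Qed.

Definition pair W (g1 : Hom W X1) (g2 : Hom W X2) : Hom W (bp_obj b) :=
  proj1_sig (constructive_indefinite_description _ (proj1 (proj2 (bp_spec b)) W g1 g2)).
Definition copair W (g1 : Hom X1 W) (g2 : Hom X2 W) : Hom (bp_obj b) W :=
  proj1_sig (constructive_indefinite_description _ (proj1 (bp_spec b) W g1 g2)).

Lemma pair_spec W g1 g2 :
  comp (bp_r1 b) (pair W g1 g2) = g1 /\ comp (bp_r2 b) (pair W g1 g2) = g2.
Proof. unfold pair. destruct constructive_indefinite_description as [h Hh]. exact (proj1 Hh). Qed.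
Lemma copair_spec W g1 g2 :
  comp (copair W g1 g2) (bp_s1 b) = g1 /\ comp (copair W g1 g2) (bp_s2 b) = g2.
Proof. unfold copair. destruct constructive_indefinite_description as [h Hh]. exact (proj1 Hh). Qed.

Lemma r1_pair W g1 g2 : comp (bp_r1 b) (pair W g1 g2) = g1.
Proof. apply pair_spec. Qed.
Lemma r2_pair W g1 g2 : comp (bp_r2 b) (pair W g1 g2) = g2.
Proof. apply pair_spec. Qed.
Lemma copair_s1 W g1 g2 : comp (copair W g1 g2) (bp_s1 b) = g1.
Proof. apply copair_spec. Qed.
Lemma copair_s2 W g1 g2 : comp (copair W g1 g2) (bp_s2 b) = g2.
Proof. apply copair_spec. Qed.

Lemma r1_s1 : comp (bp_r1 b) (bp_s1 b) = idm X1.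
Proof. apply (bp_spec b). Qed.
Lemma r2_s2 : comp (bp_r2 b) (bp_s2 b) = idm X2.
Proof. apply (bp_spec b). Qed.

Lemma r1_s2 : comp (bp_r1 b) (bp_s2 b) = zero HZ X2 X1.
Proof. apply is_zero_mor_iff, (bp_spec b). Qed.
Lemma r2_s1 : comp (bp_r2 b) (bp_s1 b) = zero HZ X1 X2.
Proof. apply is_zero_mor_iff, (bp_spec b). Qed.

End Biproduct.

Section Semiadditive.
Context {C : Category} {Z0 : C} (HZ : is_zero_object Z0).

Lemma bp_factor_indep {Y1 Y2 : C} (b b' : biproduct Y1 Y2)
  {X W : C} (p : Hom X (bp_obj b)) (p' : Hom X (bp_obj b'))
  (n : Hom (bp_obj b) W) (n' : Hom (bp_obj b') W) :
  comp (bp_r1 b) p = comp (bp_r1 b') p' -> comp (bp_r2 b) p = comp (bp_r2 b') p' ->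
  comp n (bp_s1 b) = comp n' (bp_s1 b') -> comp n (bp_s2 b) = comp n' (bp_s2 b') ->
  comp n p = comp n' p'.
Proof.
  intros Ep1 Ep2 En1 En2.
  set (phi := copair b (bp_obj b') (bp_s1 b') (bp_s2 b')).
  assert (Hr1 : comp (bp_r1 b') phi = bp_r1 b).
  { apply (bp_hom_from_ext b); rewrite <- comp_assoc; unfold phi;
      [rewrite copair_s1, !r1_s1 | rewrite copair_s2, !(r1_s2 HZ)]; reflexivity. }
  assert (Hr2 : comp (bp_r2 b') phi = bp_r2 b).
  { apply (bp_hom_from_ext b); rewrite <- comp_assoc; unfold phi;
      [rewrite copair_s1, !(r2_s1 HZ) | rewrite copair_s2, !r2_s2]; reflexivity. }
  assert (Hp : comp phi p = p').
  { apply (bp_hom_to_ext b'); rewrite comp_assoc; [rewrite Hr1 | rewrite Hr2]; assumption. }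
  assert (Hn : comp n' phi = n).
  { apply (bp_hom_from_ext b); rewrite <- comp_assoc; unfold phi;
      [rewrite copair_s1 | rewrite copair_s2]; symmetry; assumption. }
  rewrite <- Hp, comp_assoc, Hn. reflexivity.
Qed.

Section Diagonal.
Context {X : C} (b : biproduct X X).

Definition diag : Hom X (bp_obj b) := pair b X (idm X) (idm X).
Definition codiag : Hom (bp_obj b) X := copair b X (idm X) (idm X).
Definition swap : Hom (bp_obj b) (bp_obj b) := pair b (bp_obj b) (bp_r2 b) (bp_r1 b).

Lemma swap_s1 : comp swap (bp_s1 b) = bp_s2 b.
Proof.
  apply (bp_hom_to_ext b); rewrite comp_assoc; unfold swap;
    [rewrite r1_pair, (r2_s1 HZ), (r1_s2 HZ) | rewrite r2_pair, r1_s1, r2_s2]; reflexivity.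
Qed.

Lemma swap_s2 : comp swap (bp_s2 b) = bp_s1 b.
Proof.
  apply (bp_hom_to_ext b); rewrite comp_assoc; unfold swap;
    [rewrite r1_pair, r2_s2, r1_s1 | rewrite r2_pair, (r1_s2 HZ), (r2_s1 HZ)]; reflexivity.
Qed.

Lemma codiag_swap : comp codiag swap = codiag.
Proof.
  apply (bp_hom_from_ext b); rewrite <- comp_assoc; [rewrite swap_s1 | rewrite swap_s2];
    unfold codiag; rewrite ?copair_s1, ?copair_s2; reflexivity.
Qed.

End Diagonal.

Context (Hbp : has_binary_biproducts C).

Lemma ex_biproduct (X1 X2 : C) : exists _ : biproduct X1 X2, True.
Proof.
  destruct (Hbp X1 X2) as [B [s1 [r1 [s2 [r2 H]]]]]. exists (Biproduct H). exact I.
Qed.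

Definition chosen_bp (X1 X2 : C) : biproduct X1 X2 :=
  proj1_sig (constructive_indefinite_description _ (ex_biproduct X1 X2)).

Definition plus {X Y : C} (f g : Hom X Y) : Hom X Y :=
  comp (codiag (chosen_bp Y Y)) (pair (chosen_bp Y Y) X f g).
Definition plus_diag {X Y : C} (f g : Hom X Y) : Hom X Y :=
  comp (copair (chosen_bp X X) Y f g) (diag (chosen_bp X X)).

Lemma plus_eq_via {X Y : C} (b : biproduct Y Y) {f g : Hom X Y} p n :
  comp (bp_r1 b) p = f -> comp (bp_r2 b) p = g ->
  comp n (bp_s1 b) = idm Y -> comp n (bp_s2 b) = idm Y -> comp n p = plus f g.
Proof.
  intros. unfold plus, codiag. apply bp_factor_indep;
    rewrite ?r1_pair, ?r2_pair, ?copair_s1, ?copair_s2; assumption.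
Qed.

Lemma plus_zero_r {X Y : C} (f : Hom X Y) : plus f (zero HZ X Y) = f.
Proof.
  set (b := chosen_bp Y Y).
  rewrite <- (plus_eq_via b (comp (bp_s1 b) f) (codiag b)); unfold codiag.
  - rewrite comp_assoc, copair_s1, comp_idl. reflexivity.
  - rewrite comp_assoc, r1_s1, comp_idl. reflexivity.
  - rewrite comp_assoc, (r2_s1 HZ), comp_zero_l. reflexivity.
  - apply copair_s1.
  - apply copair_s2.
Qed.

Lemma plus_zero_l {X Y : C} (f : Hom X Y) : plus (zero HZ X Y) f = f.
Proof.
  set (b := chosen_bp Y Y).
  rewrite <- (plus_eq_via b (comp (bp_s2 b) f) (codiag b)); unfold codiag.
  - rewrite comp_assoc, copair_s2, comp_idl. reflexivity.
  - rewrite comp_assoc, (r1_s2 HZ), comp_zero_l. reflexivity.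
  - rewrite comp_assoc, r2_s2, comp_idl. reflexivity.
  - apply copair_s1.
  - apply copair_s2.
Qed.

Lemma plus_diag_zero_r {X Y : C} (f : Hom X Y) : plus_diag f (zero HZ X Y) = f.
Proof.
  unfold plus_diag. set (b := chosen_bp X X).
  replace (copair b Y f (zero HZ X Y)) with (comp f (bp_r1 b)).
  - rewrite <- comp_assoc. unfold diag. rewrite r1_pair, comp_idr. reflexivity.
  - apply (bp_hom_from_ext b); rewrite <- comp_assoc.
    + rewrite copair_s1, r1_s1, comp_idr. reflexivity.
    + rewrite copair_s2, (r1_s2 HZ), comp_zero_r. reflexivity.
Qed.

Lemma plus_diag_zero_l {X Y : C} (f : Hom X Y) : plus_diag (zero HZ X Y) f = f.
Proof.
  unfold plus_diag. set (b := chosen_bp X X).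
  replace (copair b Y (zero HZ X Y) f) with (comp f (bp_r2 b)).
  - rewrite <- comp_assoc. unfold diag. rewrite r2_pair, comp_idr. reflexivity.
  - apply (bp_hom_from_ext b); rewrite <- comp_assoc.
    + rewrite copair_s1, (r2_s1 HZ), comp_zero_r. reflexivity.
    + rewrite copair_s2, r2_s2, comp_idr. reflexivity.
Qed.

(* Both sides equal codiag o M o diag for the "matrix" M = [<a,b>, <c,d>]. *)
Lemma plus_interchange {X Y : C} (a b c d : Hom X Y) :
  plus_diag (plus a b) (plus c d) = plus (plus_diag a c) (plus_diag b d).
Proof.
  unfold plus, plus_diag.
  set (bY := chosen_bp Y Y). set (bX := chosen_bp X X).
  set (M := copair bX (bp_obj bY) (pair bY X a b) (pair bY X c d)).
  replace (copair bX Y _ _) with (comp (codiag bY) M).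
  2:{ apply (bp_hom_from_ext bX); rewrite <- comp_assoc; unfold M;
        [rewrite !copair_s1 | rewrite !copair_s2]; reflexivity. }
  replace (pair bY X _ _) with (comp M (diag bX)).
  2:{ apply (bp_hom_to_ext bY); rewrite comp_assoc; rewrite ?r1_pair, ?r2_pair; f_equal;
        apply (bp_hom_from_ext bX); rewrite <- comp_assoc; unfold M;
        rewrite ?copair_s1, ?copair_s2, ?r1_pair, ?r2_pair; reflexivity. }
  apply eq_sym, comp_assoc.
Qed.

Lemma plus_diag_eq_plus {X Y : C} (f g : Hom X Y) : plus_diag f g = plus f g.
Proof.
  pose proof (plus_interchange f (zero HZ X Y) (zero HZ X Y) g) as E.
  rewrite plus_zero_r, plus_zero_l, plus_diag_zero_r, plus_diag_zero_l in E. exact E.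
Qed.

Lemma plus_assoc {X Y : C} (f g h : Hom X Y) : plus (plus f g) h = plus f (plus g h).
Proof.
  pose proof (plus_interchange f (zero HZ X Y) g h) as E.
  rewrite plus_zero_r, plus_diag_zero_l, !plus_diag_eq_plus in E. symmetry. exact E.
Qed.

Lemma comp_plus_distr_r {X Y W : C} (f g : Hom X Y) (m : Hom W X) :
  comp (plus f g) m = plus (comp f m) (comp g m).
Proof.
  unfold plus at 1. rewrite <- comp_assoc. unfold codiag.
  apply plus_eq_via; rewrite ?comp_assoc, ?r1_pair, ?r2_pair, ?copair_s1, ?copair_s2;
    reflexivity.
Qed.

Lemma comp_plus_distr_l {X Y W : C} (f g : Hom X Y) (h : Hom Y W) :
  comp h (plus f g) = plus (comp h f) (comp h g).
Proof.
  rewrite <- !plus_diag_eq_plus. unfold plus_diag. rewrite comp_assoc. f_equal.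
  apply (bp_hom_from_ext (chosen_bp X X)); rewrite <- comp_assoc;
    [rewrite !copair_s1 | rewrite !copair_s2]; reflexivity.
Qed.

Definition idm_has_neg (X : C) : Prop := exists g : Hom X X, plus (idm X) g = zero HZ X X.

Lemma plus_comp_neg {K X : C} (tau : Hom K K) (v : Hom X K) :
  plus (idm K) tau = zero HZ K K -> plus v (comp tau v) = zero HZ X K.
Proof.
  intros Htau. rewrite <- (comp_idl v) at 1.
  rewrite <- comp_plus_distr_r, Htau, comp_zero_l. reflexivity.
Qed.

Lemma additive_of_idm_has_neg : (forall X : C, idm_has_neg X) -> is_additive C.
Proof.
  intros Hneg. split; [exists Z0; exact HZ |]. split; [exact Hbp |].
  intros X Y f. destruct (Hneg X) as [g Hg]. exists (comp f g).
  intros z Hz B s1 r1 s2 r2 Hb p n Hp1 Hp2 Hn1 Hn2.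
  transitivity (plus f (comp f g)); [exact (plus_eq_via (Biproduct Hb) p n Hp1 Hp2 Hn1 Hn2) |].
  rewrite (proj1 (is_zero_mor_iff HZ z) Hz), <- (comp_idr f) at 1.
  rewrite <- comp_plus_distr_l, Hg, comp_zero_r. reflexivity.
Qed.

Section KernelOfCodiagonal.
Context {X : C} (b : biproduct X X).

Lemma plus_idm_swap : plus (idm (bp_obj b)) (swap b) = comp (diag b) (codiag b).
Proof.
  apply (bp_hom_to_ext b); apply (bp_hom_from_ext b);
    rewrite <- !comp_assoc, comp_plus_distr_r, comp_plus_distr_l, comp_idl;
    rewrite ?swap_s1, ?swap_s2; unfold diag, codiag;
    rewrite ?(comp_assoc (bp_r1 b)), ?(comp_assoc (bp_r2 b)), ?r1_pair, ?r2_pair,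
      ?copair_s1, ?copair_s2, ?comp_idl, ?r1_s1, ?(r1_s2 HZ), ?(r2_s1 HZ), ?r2_s2,
      ?plus_zero_r, ?plus_zero_l; reflexivity.
Qed.

Lemma kernel_codiag_idm_has_neg {K : C} (k : Hom K (bp_obj b)) :
  is_kernel (codiag b) k -> idm_has_neg K.
Proof.
  intros Hk.
  assert (Hzero : comp (codiag b) k = zero HZ K X) by apply is_zero_mor_iff, Hk.
  destruct (proj2 Hk K (comp (swap b) k)) as [tau [Htau _]].
  { rewrite comp_assoc, codiag_swap, Hzero. apply zero_is_zero_mor. }
  exists tau. apply (kernel_mono Hk).
  rewrite comp_plus_distr_l, comp_idr, Htau, comp_zero_r, <- (comp_idl k) at 1.
  rewrite <- comp_plus_distr_r, plus_idm_swap, <- comp_assoc, Hzero, comp_zero_r.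
  reflexivity.
Qed.

End KernelOfCodiagonal.

End Semiadditive.

Section PreHilbert.
Context {C : StarCategory} {Z0 : C} (HZ : is_zero_object Z0).

Lemma star_zero (X Y : C) : star (zero HZ X Y) = zero HZ Y X.
Proof.
  apply is_zero_mor_iff. unfold zero. rewrite star_comp.
  exists Z0, (star (from_zero HZ Y)), (star (to_zero HZ X)). split; [exact HZ | reflexivity].
Qed.

Lemma star_pair {X1 X2 : C} (b : biproduct X1 X2) :
  bp_r1 b = star (bp_s1 b) -> bp_r2 b = star (bp_s2 b) ->
  forall W (g1 : Hom W X1) (g2 : Hom W X2),
    star (pair b W g1 g2) = copair b W (star g1) (star g2).
Proof.
  intros Hr1 Hr2 W g1 g2. apply (bp_hom_from_ext b).
  - rewrite copair_s1, <- (star_invol (bp_s1 b)), <- star_comp, <- Hr1, r1_pair.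
    reflexivity.
  - rewrite copair_s2, <- (star_invol (bp_s2 b)), <- star_comp, <- Hr2, r2_pair.
    reflexivity.
Qed.

(* The dagger form of "(im d)^perp^perp = im d" for a normal mono d: q^* factors through
   ker d^*, so k^* m = 0 forces q m = 0. *)
Lemma perp_kernel_adjoint_factors {X B Y K W : C} (d : Hom X B) (q : Hom B Y)
  (k : Hom K B) (m : Hom W B) :
  is_kernel q d -> is_kernel (star d) k -> comp (star k) m = zero HZ W K ->
  exists x, comp d x = m.
Proof.
  intros Hd Hk Hm.
  destruct (proj2 Hk _ (star q)) as [u [Hu _]].
  { rewrite <- star_comp, (proj1 (is_zero_mor_iff HZ _) (proj1 Hd)), star_zero.
    apply zero_is_zero_mor. }
  destruct (proj2 Hd W m) as [x [Hx _]].
  { rewrite <- (star_invol q), <- Hu, star_comp, <- comp_assoc, Hm, comp_zero_r.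
    apply zero_is_zero_mor. }
  exists x. exact Hx.
Qed.

Context (Hbp : has_binary_biproducts C).

Lemma idm_has_neg_of_normal_diag {X : C} (b : biproduct X X) {K : C} (k : Hom K (bp_obj b)) :
  bp_r1 b = star (bp_s1 b) -> bp_r2 b = star (bp_s2 b) -> is_normal_mono (diag b) ->
  is_kernel (codiag b) k -> is_isometry k -> idm_has_neg HZ Hbp X.
Proof.
  intros Hr1 Hr2 [Y [q Hdiag]] Hk Hiso.
  assert (Hcodiag : codiag b = star (diag b)).
  { unfold codiag, diag. rewrite (star_pair b Hr1 Hr2), star_id. reflexivity. }
  destruct (kernel_codiag_idm_has_neg HZ Hbp b k Hk) as [tau Htau].
  set (e := comp tau (comp (star k) (bp_s1 b))).
  set (m := plus Hbp (bp_s1 b) (comp k e)).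
  assert (Hperp : comp (star k) m = zero HZ X K).
  { unfold m, e. rewrite (comp_plus_distr_l HZ), (comp_assoc (star k) k), Hiso, comp_idl.
    apply plus_comp_neg, Htau. }
  rewrite Hcodiag in Hk.
  destruct (perp_kernel_adjoint_factors (diag b) q k m Hdiag Hk Hperp) as [x Hx].
  assert (Hr : comp (bp_r1 b) m = comp (bp_r2 b) m).
  { rewrite <- Hx, !comp_assoc. unfold diag. rewrite r1_pair, r2_pair. reflexivity. }
  unfold m in Hr. rewrite !(comp_plus_distr_l HZ), r1_s1, (r2_s1 HZ), plus_zero_l in Hr.
  exists (plus Hbp (comp (bp_r1 b) (comp k e)) (comp (bp_r2 b) (comp k (comp tau e)))).
  rewrite <- (plus_assoc HZ), Hr, <- !(comp_plus_distr_l HZ), (plus_comp_neg HZ Hbp tau e Htau).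
  rewrite !comp_zero_r. reflexivity.
Qed.

End PreHilbert.

Theorem proposition3p2 (C : StarCategory) :
  is_preHilbert C -> is_additive C.
Proof.
  intros [[Z0 HZ] [Horth [Hker Hdiag]]].
  assert (Hbp : has_binary_biproducts C).
  { intros X1 X2. destruct (Horth X1 X2) as [B [s1 [r1 [s2 [r2 [Hb _]]]]]].
    exists B, s1, r1, s2, r2. exact Hb. }
  apply (additive_of_idm_has_neg HZ Hbp). intros X.
  destruct (Hdiag X) as [B [s1 [r1 [s2 [r2 [[Hb [Hr1 Hr2]] Hnormal]]]]]].
  set (b := Biproduct Hb).
  destruct (Hker _ _ (codiag b)) as [K [k [Hk Hiso]]].
  apply (idm_has_neg_of_normal_diag HZ Hbp b k Hr1 Hr2); [| exact Hk | exact Hiso].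
  apply Hnormal; [exact (r1_pair b X _ _) | exact (r2_pair b X _ _)].
Qed.
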